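(* Let $(\mathcal{A},e)$ be an order-unit space and $L$ a closed Lip-norm on $\mathcal{A}$. Let $\mathcal{K}=\{\tilde a\in\mathcal{A}/\mathbb{R}e: \tilde L(\tilde a)\le1\}$ and let $Af_0(\mathcal{K})$ be the Banach space of $\|\cdot\|^{\sim}$-continuous affine real functions on $\mathcal{K}$ vanishing at $0$, with the supremum norm. Each $\lambda\in\mathcal{A}'^0=\{\lambda\in\mathcal{A}':\lambda(e)=0\}$ defines a function $\tilde a\mapsto\lambda(a)$ on $\mathcal{K}$ belonging to $Af_0(\mathcal{K})$; the set of functions so obtained is dense in $Af_0(\mathcal{K})$ for the supremum norm.
   Context: An order-unit space is a real partially ordered vector space $\mathcal{A}$ with distinguished $e$ such that (i) for each $a$ there is $r$ with $a\le re$, and (ii) if $a\le re$ for all $r>0$ then $a\le0$; norm $\|a\|=\inf\{r\ge0:-re\le a\le re\}$ (not necessarily complete), with Banach dual $\mathcal{A}'$. $\|\tilde a\|^{\sim}=\inf_t\|a+te\|$ is the quotient norm on $\mathcal{A}/\mathbb{R}e$, and $\tilde L(\tilde a)=L(a)$. A Lip-norm is a finite-valued seminorm $L$ on $\mathcal{A}$ with: (1) $L(a)=0$ iff $a\in\mathbb{R}e$; (2) $\{a:L(a)\le1\}$ is norm-closed; (3) the image of $\{a:L(a)\le1\}$ in $\mathcal{A}/\mathbb{R}e$ is totally bounded for $\|\cdot\|^{\sim}$. $L$ is closed if $\{a:L(a)\le1\}$ is complete for the norm metric. *)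

From HB Require Import structures.
From mathcomp Require Import all_boot all_order all_algebra.
From mathcomp Require Import boolp classical_sets reals.
Set Implicit Arguments. Unset Strict Implicit. Unset Printing Implicit Defensive.
Import Order.TTheory GRing.Theory Num.Theory.
Local Open Scope ring_scope.
Local Open Scope classical_set_scope.

Section OrderUnit.
Variables (R : realType) (A : lmodType R).

Definition is_partially_ordered_vs (le : A -> A -> Prop) : Prop :=
  [/\ forall a, le a a,
      forall a b, le a b -> le b a -> a = b,
      forall a b c, le a b -> le b c -> le a c,
      forall a b c, le a b -> le (a + c) (b + c) &
      forall a b (s : R), le a b -> 0 <= s -> le (s *: a) (s *: b)].

Definition is_order_unit_space (le : A -> A -> Prop) (e : A) : Prop :=
  [/\ is_partially_ordered_vs le,
      forall a, exists r : R, le a (r *: e) &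
      forall a, (forall r : R, 0 < r -> le a (r *: e)) -> le a 0].

Definition ou_norm (le : A -> A -> Prop) (e : A) (a : A) : R :=
  inf [set r : R | 0 <= r /\ le (- (r *: e)) a /\ le a (r *: e)].

(* quotient norm on A / Re, computed on a representative: inf_t ||a + t e|| *)
Definition q_norm (le : A -> A -> Prop) (e : A) (a : A) : R :=
  inf [set ou_norm le e (a + t *: e) | t in [set: R]].

Definition in_dual (le : A -> A -> Prop) (e : A) (lam : A -> R) : Prop :=
  (forall (s : R) a b, lam (s *: a + b) = s * lam a + lam b) /\
  exists C : R, forall a, `|lam a| <= C * ou_norm le e a.

Definition is_seminorm (L : A -> R) : Prop :=
  (forall a b, L (a + b) <= L a + L b) /\
  (forall (s : R) a, L (s *: a) = `|s| * L a).

Definition is_lip_norm (le : A -> A -> Prop) (e : A) (L : A -> R) : Prop :=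
  [/\ is_seminorm L,
      (forall a, L a = 0 <-> exists t : R, a = t *: e),
      (forall a, (forall eps : R, 0 < eps ->
                   exists b, L b <= 1 /\ ou_norm le e (a - b) < eps) -> L a <= 1) &
      (forall eps : R, 0 < eps -> exists s : seq A,
          forall a, L a <= 1 -> exists2 b, b \in s & q_norm le e (a - b) < eps)].

Definition is_closed_lip_norm (le : A -> A -> Prop) (e : A) (L : A -> R) : Prop :=
  is_lip_norm le e L /\
  forall u : nat -> A, (forall n, L (u n) <= 1) ->
    (forall eps : R, 0 < eps -> exists N : nat, forall m n : nat,
        (N <= m)%N -> (N <= n)%N -> ou_norm le e (u m - u n) < eps) ->
    exists2 a, L a <= 1 & forall eps : R, 0 < eps -> exists N : nat,
        forall n : nat, (N <= n)%N -> ou_norm le e (u n - a) < eps.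

(* f : A -> R represents an element of Af_0(K), K = {a~ : L~(a~) <= 1}:
   it is well defined on classes of A/Re (within K), affine on K,
   vanishes at 0 and is continuous on K for the quotient norm. Only the
   values of f on {a : L a <= 1} matter. *)
Definition in_Af0K (le : A -> A -> Prop) (e : A) (L : A -> R) (f : A -> R) : Prop :=
  [/\ (forall a (t : R), L a <= 1 -> f (a + t *: e) = f a),
      (forall a b (s : R), L a <= 1 -> L b <= 1 -> 0 <= s <= 1 ->
          f (s *: a + (1 - s) *: b) = s * f a + (1 - s) * f b),
      f 0 = 0 &
      (forall a, L a <= 1 -> forall eps : R, 0 < eps ->
          exists2 del : R, 0 < del & forall b, L b <= 1 ->
             q_norm le e (b - a) < del -> `|f b - f a| < eps)].

End OrderUnit.

(* Continuity at 0 and affinity give -f <= eps + M ||.|| on K for some M.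
   Hence the infimal convolution of the positively homogeneous extension of
   f + eps from K with M ||.|| is a finite sublinear functional p, with p <= 0 on
   Re.  A linear functional below p (Hahn-Banach, from a minimal sublinear
   functional below p given by Zorn's lemma) is bounded, vanishes at e, and since
   K is symmetric it stays within eps of f on K.  Conversely a bounded lam with
   lam e = 0 satisfies |lam b - lam a| <= C ||b - a + t e|| for every t.  Only
   the seminorm property of L and L (R e) = 0 are needed. *)

From HB Require Import structures.
From mathcomp Require Import all_boot all_order all_algebra.
From mathcomp Require Import boolp classical_sets reals.
From mathcomp Require Import lra ring.
Set Implicit Arguments. Unset Strict Implicit. Unset Printing Implicit Defensive.
Import Order.TTheory GRing.Theory Num.Theory.
Local Open Scope ring_scope.
Local Open Scope classical_set_scope.

Section InfArith.
Variable R : realType.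

Lemma lb_le_infD (E1 E2 : set R) z : E1 !=set0 -> E2 !=set0 ->
  (forall a b, E1 a -> E2 b -> z <= a + b) -> z <= inf E1 + inf E2.
Proof.
move=> E1_neq0 E2_neq0 lbE.
suff : z - inf E1 <= inf E2 by lra.
apply: lb_le_inf => // b E2b.
suff : z - b <= inf E1 by lra.
by apply: lb_le_inf => // a E1a; have := lbE a b E1a E2b; lra.
Qed.

Lemma lb_le_infZ (E : set R) (s z : R) : E !=set0 -> 0 < s ->
  (forall a, E a -> z <= s * a) -> z <= s * inf E.
Proof.
move=> E_neq0 s_gt0 lbE; rewrite -ler_pdivrMl //.
by apply: lb_le_inf => // a Ea; rewrite ler_pdivrMl //; exact: lbE.
Qed.

End InfArith.

Section Sublinear.
Variables (R : realType) (A : lmodType R).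

Definition sublinear (q : A -> R) :=
  (forall x y, q (x + y) <= q x + q y) /\
  (forall (s : R) x, 0 < s -> q (s *: x) <= s * q x).

Variable q : A -> R.
Hypothesis q_sublinear : sublinear q.

Lemma sublinear0 : q 0 = 0.
Proof.
have := q_sublinear.1 0 0; have := q_sublinear.2 2^-1 0.
rewrite addr0 scaler0 invr_gt0 => /(_ ltac:(lra)); lra.
Qed.

Lemma sublinear_addN x : 0 <= q x + q (- x).
Proof. by have := q_sublinear.1 x (- x); rewrite subrr sublinear0. Qed.

Lemma sublinearZ (t : R) x : 0 <= t -> q (t *: x) = t * q x.
Proof.
rewrite le_eqVlt => /orP[/eqP <-|t_gt0]; first by rewrite scale0r mul0r sublinear0.
apply/eqP; rewrite eq_le q_sublinear.2 //=.
have := q_sublinear.2 t^-1 (t *: x); rewrite invr_gt0 scalerA mulVf ?gt_eqF //.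
by rewrite scale1r ler_pdivlMl // mulrC; apply.
Qed.

Definition descent (y x : A) : R :=
  inf [set q (x + t *: y) - t * q y | t in [set t : R | 0 <= t]].

Lemma descent_le y x (t : R) : 0 <= t -> descent y x <= q (x + t *: y) - t * q y.
Proof.
move=> t_ge0; apply: ge_inf; last by exists t.
exists (- q (- x)) => _ [s s_ge0 <-].
have := q_sublinear.1 (x + s *: y) (- x).
by rewrite addrC addKr sublinearZ //; lra.
Qed.

Lemma descent_le_self y x : descent y x <= q x.
Proof. by have := descent_le y x (lexx (0 : R)); rewrite scale0r addr0 mul0r subr0. Qed.

Lemma descent_sublinear y : sublinear (descent y).
Proof.
have descent_neq0 x : [set q (x + t *: y) - t * q y | t in [set t : R | 0 <= t]] !=set0.
  by exists (q (x + 0 *: y) - 0 * q y); exists 0 => //=.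
split=> [x1 x2|s x s_gt0].
  apply: (lb_le_infD (descent_neq0 x1) (descent_neq0 x2)) => _ _ [t1 t1_ge0 <-] [t2 t2_ge0 <-].
  have := descent_le y (x1 + x2) (addr_ge0 t1_ge0 t2_ge0).
  rewrite scalerDl addrACA.
  by have := q_sublinear.1 (x1 + t1 *: y) (x2 + t2 *: y); lra.
apply: (lb_le_infZ (descent_neq0 x) s_gt0) => _ [t t_ge0 <-].
have := descent_le y (s *: x) (mulr_ge0 (ltW s_gt0) t_ge0).
by rewrite -scalerA -scalerDr sublinearZ ?(ltW s_gt0) // mulrBr mulrA.
Qed.

End Sublinear.

Section MinimalSublinear.
Variables (R : realType) (A : lmodType R).

Definition minimal_sublinear (q : A -> R) :=
  sublinear q /\ forall q', sublinear q' -> (forall x, q' x <= q x) -> forall x, q x <= q' x.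

(* Minimality against [descent q y] gives [q x <= q (x + y) - q y]. *)
Lemma minimal_sublinear_linear q : minimal_sublinear q ->
  (forall x y, q (x + y) = q x + q y) /\ (forall (s : R) x, q (s *: x) = s * q x).
Proof.
move=> [q_sub q_min].
have q_descent x y : q x <= q (x + y) - q y.
  have := q_min _ (descent_sublinear q_sub y) (descent_le_self q_sub y) x.
  by move=> /le_trans; apply; have := descent_le q_sub y x ler01; rewrite scale1r mul1r.
have qN y : q (- y) = - q y.
  have := q_descent (- y) y; rewrite addNr sublinear0 //.
  by have := sublinear_addN q_sub y; lra.
have qD x y : q (x + y) = q x + q y.
  by apply/eqP; rewrite eq_le q_sub.1 /=; have := q_descent x y; lra.
split=> // s x; have [s_ge0|s_lt0] := leP 0 s; first exact: sublinearZ.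
have Ns_ge0 : 0 <= - s by rewrite oppr_ge0 ltW.
have := sublinearZ q_sub x Ns_ge0.
by rewrite scaleNr !qN mulNr => /oppr_inj.
Qed.

End MinimalSublinear.

Section ChainInf.
Variables (R : realType) (A : lmodType R) (C : set (A -> R)).
Hypotheses (C_neq0 : C !=set0) (C_sublinear : forall q, C q -> sublinear q).
Hypothesis C_chain : total_on C (fun q1 q2 => forall x, q1 x <= q2 x).

Definition chain_inf (x : A) : R := inf [set q x | q in C].

Let chain_inf_neq0 x : [set q x | q in C] !=set0.
Proof. by have [q Cq] := C_neq0; exists (q x), q. Qed.

Lemma chain_inf_le q x : C q -> chain_inf x <= q x.
Proof.
move=> Cq; apply: ge_inf; last by exists q.
exists (- q (- x)) => _ [q1 Cq1 <-].
have := sublinear_addN (C_sublinear Cq) x; have := sublinear_addN (C_sublinear Cq1) x.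
by have [le_q1|le_1q] := C_chain Cq Cq1; [have := le_q1 x|have := le_1q (- x)]; lra.
Qed.

Lemma chain_inf_sublinear : sublinear chain_inf.
Proof.
split=> [x y|s x s_gt0].
  apply: lb_le_infD => // _ _ [q1 Cq1 <-] [q2 Cq2 <-].
  have [le_q12|le_q21] := C_chain Cq1 Cq2.
  - have := (C_sublinear Cq1).1 x y; have := le_q12 y; have := chain_inf_le (x + y) Cq1; lra.
  - have := (C_sublinear Cq2).1 x y; have := le_q21 x; have := chain_inf_le (x + y) Cq2; lra.
apply: lb_le_infZ => // _ [q Cq <-].
exact: le_trans (chain_inf_le _ Cq) ((C_sublinear Cq).2 s x s_gt0).
Qed.

End ChainInf.

Section HahnBanach.
Variables (R : realType) (A : lmodType R) (p : A -> R).
Hypothesis p_sublinear : sublinear p.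

Lemma exists_minimal_sublinear_below :
  exists2 q, minimal_sublinear q & forall x, q x <= p x.
Proof.
pose T := {q : A -> R | sublinear q /\ forall x, q x <= p x}.
pose above (t1 t2 : T) := `[< forall x, sval t2 x <= sval t1 x >].
have [[q [q_sub q_le_p]] q_max] : exists t, premaximal above t.
  apply: (ZL_preorder (exist _ p (conj p_sublinear (fun x => lexx _)))).
  - by move=> t; apply/asboolP => x.
  - move=> r s t /asboolP rs /asboolP st; apply/asboolP => x; exact: le_trans (st x) (rs x).
  move=> Ct Ct_chain.
  have [[t0 Ct0]|Ct_eq0] := pselect (Ct !=set0); last first.
    by exists (exist _ p (conj p_sublinear (fun x => lexx _))) => t Ct_t; case: Ct_eq0; exists t.
  pose C := [set sval t | t in Ct].
  have C_sub q : C q -> sublinear q by move=> [t _ <-]; exact: (proj2_sig t).1.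
  have C_chain : total_on C (fun q1 q2 => forall x, q1 x <= q2 x).
    move=> _ _ [t1 Ct1 <-] [t2 Ct2 <-].
    by have [/asboolP|/asboolP] := Ct_chain t1 t2 Ct1 Ct2; [right|left].
  have C_neq0 : C !=set0 by exists (sval t0), t0.
  have m_le_p x : chain_inf C x <= p x.
    exact: le_trans (chain_inf_le C_sub C_chain x (imageP _ Ct0)) ((proj2_sig t0).2 x).
  exists (exist _ (chain_inf C) (conj (chain_inf_sublinear C_neq0 C_sub C_chain) m_le_p)) => t Ct_t.
  by apply/asboolP => x /=; apply: chain_inf_le; last exact: imageP.
exists q => //; split=> // q' q'_sub q'_le_q.
have q'_le_p x : q' x <= p x := le_trans (q'_le_q x) (q_le_p x).
by have /asboolP := q_max (exist _ q' (conj q'_sub q'_le_p)) (asboolT q'_le_q).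
Qed.

Lemma hahn_banach : exists lam : A -> R,
  [/\ forall x y, lam (x + y) = lam x + lam y,
      forall (s : R) x, lam (s *: x) = s * lam x &
      forall x, lam x <= p x].
Proof.
have [q q_min q_le_p] := exists_minimal_sublinear_below.
by have [qD qZ] := minimal_sublinear_linear q_min; exists q.
Qed.

End HahnBanach.

Section OrderUnitNorm.
Variables (R : realType) (A : lmodType R) (le : A -> A -> Prop) (e : A).

Let bounds (a : A) := [set r : R | 0 <= r /\ le (- (r *: e)) a /\ le a (r *: e)].

Let ou_norm_le a r : bounds a r -> ou_norm le e a <= r.
Proof. by move=> ?; apply: ge_inf => //; exists 0 => x []. Qed.

Lemma ou_norm_ge0 a : 0 <= ou_norm le e a.
Proof.
have [bounds_neq0|bounds_eq0] := pselect (bounds a !=set0).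
  by apply: lb_le_inf => // r [].
by rewrite /ou_norm inf_out // => -[].
Qed.

Lemma q_norm_le_ou_norm a : q_norm le e a <= ou_norm le e a.
Proof.
apply: ge_inf; last by exists 0 => //; rewrite scale0r addr0.
by exists 0 => _ [t _ <-]; exact: ou_norm_ge0.
Qed.

Hypothesis ou : is_order_unit_space le e.

Let le_add a b c d : le a b -> le c d -> le (a + c) (b + d).
Proof.
case: ou => -[_ _ le_trans le_addr _] _ _ le_ab le_cd.
apply: (le_trans _ (b + c)); first exact: le_addr.
by rewrite (addrC b c) (addrC b d); exact: le_addr.
Qed.

Let le_opp a b : le a b -> le (- b) (- a).
Proof.
case: ou => -[_ _ _ le_addr _] _ _ /(le_addr _ _ (- a - b)).
by rewrite addrA subrr add0r addrCA subrr addr0.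
Qed.

Let ge0e_bounds a r : bounds a r -> 0 < r -> le 0 e.
Proof.
case: ou => -[_ _ le_trans le_addr le_scale] _ _ [_ [lo hi]] r_gt0.
have /(le_addr _ _ (r *: e)) := le_trans _ _ _ lo hi.
rewrite addNr -scalerDl => /(le_scale _ _ (r + r)^-1).
rewrite scaler0 scalerA mulVf ?scale1r ?gt_eqF ?addr_gt0 //.
by apply; rewrite invr_ge0 ltW ?addr_gt0.
Qed.

(* The definition also admits units with [~ le 0 e], such as [e = -1] in [R];
   for those the norm vanishes identically. *)
Lemma ou_norm_degenerate a : ~ le 0 e -> ou_norm le e a = 0.
Proof.
move=> ge0e_false; apply/eqP; rewrite eq_le ou_norm_ge0 andbT.
have [[r bar]|bounds_eq0] := pselect (bounds a !=set0); last first.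
  by rewrite /ou_norm inf_out // => -[].
suff r0 : r = 0 by rewrite -r0; exact: ou_norm_le.
case: (bar) => r_ge0 _; apply/eqP; rewrite eq_le r_ge0 andbT leNgt.
by apply/negP => /(ge0e_bounds bar).
Qed.

Let bounds_neq0 a : le 0 e -> bounds a !=set0.
Proof.
case: ou => -[_ _ le_trans le_addr le_scale] le_unit _ ge0e.
have le_scale_e r1 r2 : r1 <= r2 -> le (r1 *: e) (r2 *: e).
  rewrite -subr_ge0 => /(le_scale _ _ _ ge0e)/(le_addr _ _ (r1 *: e)).
  by rewrite scaler0 add0r -scalerDl subrK.
have [r1 le_r1] := le_unit a; have [r2 le_r2] := le_unit (- a).
exists (`|r1| + `|r2|); split; first by rewrite addr_ge0.
split.
  rewrite -[a]opprK; apply: le_opp; apply: le_trans le_r2 (le_scale_e _ _ _).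
  by rewrite ler_wpDl // ler_norm.
by apply: le_trans le_r1 (le_scale_e _ _ _); rewrite ler_wpDr // ler_norm.
Qed.

Lemma ou_norm_sublinear : sublinear (ou_norm le e).
Proof.
have [ge0e|ge0e_false] := pselect (le 0 e); last first.
  by split=> *; rewrite !ou_norm_degenerate // ?mulr0 ?addr0.
split=> [a b|s a s_gt0].
  apply: lb_le_infD; try exact: bounds_neq0.
  move=> r1 r2 [r1_ge0 [lo1 hi1]] [r2_ge0 [lo2 hi2]]; apply: ou_norm_le.
  by split; [rewrite addr_ge0|rewrite scalerDl opprD; split; exact: le_add].
apply: lb_le_infZ => //; first exact: bounds_neq0.
case: ou => -[_ _ _ _ le_scale] _ _ r [r_ge0 [lo hi]]; apply: ou_norm_le.
split; first by rewrite mulr_ge0 // ltW.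
rewrite -scalerA -scalerN.
by split; apply: le_scale => //; exact: ltW.
Qed.

Lemma ou_normN a : ou_norm le e (- a) = ou_norm le e a.
Proof.
have le_normN b : ou_norm le e (- b) <= ou_norm le e b.
  have [ge0e|ge0e_false] := pselect (le 0 e); last by rewrite !ou_norm_degenerate.
  apply: lb_le_inf; first exact: bounds_neq0.
  move=> r [r_ge0 [lo hi]]; apply: ou_norm_le; split=> //; split; first exact: le_opp.
  by rewrite -[_ *: e]opprK; exact: le_opp.
by apply/eqP; rewrite eq_le le_normN /=; have := le_normN (- a); rewrite opprK.
Qed.

End OrderUnitNorm.

Section Seminorm.
Variables (R : realType) (A : lmodType R) (L : A -> R).
Hypothesis L_seminorm : is_seminorm L.

Lemma seminorm_ballN a : L a <= 1 -> L (- a) <= 1.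
Proof. by rewrite -scaleN1r L_seminorm.2 normrN1 mul1r. Qed.

Lemma seminorm_ball_convex a b (s : R) : L a <= 1 -> L b <= 1 -> 0 <= s <= 1 ->
  L (s *: a + (1 - s) *: b) <= 1.
Proof.
move=> La Lb /andP[s_ge0 s_le1]; have s'_ge0 : 0 <= 1 - s by rewrite subr_ge0.
apply: le_trans (L_seminorm.1 _ _) _; rewrite !L_seminorm.2 !ger0_norm //.
by have := ler_wpM2l s_ge0 La; have := ler_wpM2l s'_ge0 Lb; lra.
Qed.

End Seminorm.

Section Dual.
Variables (R : realType) (A : lmodType R) (le : A -> A -> Prop) (e : A) (L : A -> R).

Lemma dual_in_Af0K lam : in_dual le e lam -> lam e = 0 -> in_Af0K le e L lam.
Proof.
move=> [lam_lin [C lam_bounded]] lam_e.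
have lam0 : lam 0 = 0 by have := lam_lin 1 0 0; rewrite scale1r addr0 mul1r; lra.
have lamD x y : lam (x + y) = lam x + lam y by have := lam_lin 1 x y; rewrite scale1r mul1r.
have lamZ s x : lam (s *: x) = s * lam x by rewrite -[_ *: _]addr0 lam_lin lam0 addr0.
split=> //.
- by move=> a t _; rewrite lamD lamZ lam_e mulr0 addr0.
- by move=> a b s _ _ _; rewrite lamD !lamZ.
move=> a _ eps eps_gt0.
have C1_gt0 : 0 < `|C| + 1 by rewrite ltr_wpDl.
exists (eps / (`|C| + 1)) => [|b _ /inf_lt[]]; first by rewrite divr_gt0.
  by exists (ou_norm le e (b - a + 0 *: e)), 0.
move=> _ [t _ <-] norm_lt.
have -> : lam b - lam a = lam (b - a + t *: e).
  by rewrite lamD lamZ lam_e mulr0 addr0 lamD -scaleN1r lamZ mulN1r.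
apply: le_lt_trans (lam_bounded _) _.
apply: le_lt_trans (ler_wpM2r (ou_norm_ge0 _ _ _) (ler_norm C)) _.
rewrite ltr_pdivlMr // in norm_lt; apply: le_lt_trans norm_lt.
by rewrite mulrC; apply: ler_wpM2l; [exact: ou_norm_ge0|lra].
Qed.

End Dual.

Section Approximation.
Variables (R : realType) (A : lmodType R) (N : A -> R) (K : set A) (f : A -> R) (e : A).
Hypotheses (N_sublinear : sublinear N) (N_ge0 : forall x, 0 <= N x).
Hypothesis NN : forall x, N (- x) = N x.
Hypotheses (K_convex : forall a b (s : R), K a -> K b -> 0 <= s <= 1 -> K (s *: a + (1 - s) *: b))
  (KN : forall a, K a -> K (- a)) (Ke : forall t, K (t *: e)).
Hypotheses (f_affine : forall a b (s : R), K a -> K b -> 0 <= s <= 1 ->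
    f (s *: a + (1 - s) *: b) = s * f a + (1 - s) * f b)
  (fe : forall t, f (t *: e) = 0).
Variables (eps del : R).
Hypotheses (eps_gt0 : 0 < eps) (del_gt0 : 0 < del).
Hypothesis f_small : forall k, K k -> N k < del -> `|f k| < eps.

Let K0 : K 0. Proof. by have := Ke 0; rewrite scale0r. Qed.

Let f0 : f 0 = 0. Proof. by have := fe 0; rewrite scale0r. Qed.

Let KZ k (t : R) : K k -> 0 <= t <= 1 -> K (t *: k).
Proof. by move=> Kk t01; have := K_convex Kk K0 t01; rewrite scaler0 addr0. Qed.

Let fZ k (t : R) : K k -> 0 <= t <= 1 -> f (t *: k) = t * f k.
Proof.
by move=> Kk t01; rewrite -[t *: k]addr0 -(scaler0 _ (1 - t)) f_affine // f0 mulr0 addr0.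
Qed.

Let fN k : K k -> f (- k) = - f k.
Proof.
move=> Kk; have half01 : 0 <= (2^-1 : R) <= 1 by apply/andP; split; lra.
have := f_affine Kk (KN Kk) half01.
by rewrite scalerN (_ : 1 - 2^-1 = 2^-1 :> R) ?addrN ?f0; lra.
Qed.

Let M := 2 * eps / del.

Let M_ge0 : 0 <= M. Proof. by rewrite divr_ge0 // ?ltW // mulr_gt0. Qed.

(* Scaling [k] down to norm [del / 2] brings it into the ball where [f] is small. *)
Let oppf_le k : K k -> - f k <= eps + M * N k.
Proof.
move=> Kk; have Nk_ge0 := N_ge0 k; have MNk_ge0 := mulr_ge0 M_ge0 Nk_ge0.
have [Nk_lt|Nk_ge] := ltP (N k) del.
  by have := f_small Kk Nk_lt; rewrite -normrN => /(le_lt_trans (ler_norm _)); lra.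
have Nk_gt0 : 0 < N k := lt_le_trans del_gt0 Nk_ge.
pose t := del / (2 * N k).
have t_gt0 : 0 < t by rewrite divr_gt0 // mulr_gt0.
have t01 : 0 <= t <= 1.
  by rewrite ltW //= ler_pdivrMr ?mulr_gt0 // mul1r; lra.
have Ntk : N (t *: k) = del / 2.
  by rewrite sublinearZ ?ltW // /t; field; rewrite gt_eqF.
have Ntk_lt : N (t *: k) < del by rewrite Ntk ltr_pdivrMr // ltr_pMr // ltr1n.
have epsE : eps = t * (M * N k) by rewrite /t /M; field; rewrite !gt_eqF.
have := f_small (KZ Kk t01) Ntk_lt.
rewrite fZ // -normrN -mulrN => /(le_lt_trans (ler_norm _)).
rewrite {1}epsE ltr_pM2l // => /ltW /le_trans; apply; exact: ler_wpDl (ltW eps_gt0) (lexx _).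
Qed.

(* The largest sublinear functional below [f + eps] on [K] and below [M * N]. *)
Definition minorant (x : A) : R :=
  inf [set v | exists s k y, [/\ 0 <= s, K k, x = s *: k + y &
                                 v = s * (f k + eps) + M * N y]].

Let minorant_le x (s : R) k y : 0 <= s -> K k -> x = s *: k + y ->
  minorant x <= s * (f k + eps) + M * N y.
Proof.
move=> s_ge0 Kk ->; apply: ge_inf; last by exists s, k, y.
exists (- (M * N (s *: k + y))) => _ [s' [k' [y' [s'_ge0 Kk' -> ->]]]].
have N_k'_le : s' * N k' <= N (s' *: k' + y') + N y'.
  by rewrite -sublinearZ // -(NN y'); have := N_sublinear.1 (s' *: k' + y') (- y'); rewrite addrK.
have k'_ge : 0 <= f k' + eps + M * N k' by have := oppf_le Kk'; lra.
have := mulr_ge0 s'_ge0 k'_ge; have := ler_wpM2l M_ge0 N_k'_le.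
by rewrite !mulrDr mulrCA; lra.
Qed.

Let minorant_le_N x : minorant x <= M * N x.
Proof.
have := minorant_le (lexx 0) K0 (_ : x = 0 *: 0 + x).
by rewrite scale0r add0r mul0r add0r; apply.
Qed.

Let minorant_subadditive x1 x2 : minorant (x1 + x2) <= minorant x1 + minorant x2.
Proof.
apply: lb_le_infD.
- by exists (0 * (f 0 + eps) + M * N x1), 0, 0, x1; rewrite scale0r add0r.
- by exists (0 * (f 0 + eps) + M * N x2), 0, 0, x2; rewrite scale0r add0r.
move=> _ _ [s1 [k1 [y1 [s1_ge0 Kk1 -> ->]]]] [s2 [k2 [y2 [s2_ge0 Kk2 -> ->]]]].
have := ler_wpM2l M_ge0 (N_sublinear.1 y1 y2); rewrite mulrDr.
have [s12_eq0|s12_neq0] := eqVneq (s1 + s2) 0.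
  have [-> ->] : s1 = 0 /\ s2 = 0 by lra.
  by rewrite !scale0r !mul0r !add0r => ?; exact: le_trans (minorant_le_N _) _.
have s12_gt0 : 0 < s1 + s2 by rewrite lt_neqAle eq_sym s12_neq0 addr_ge0.
pose a := s1 / (s1 + s2).
have s1E : (s1 + s2) * a = s1 by rewrite /a mulrC divfK.
have s2E : (s1 + s2) * (1 - a) = s2 by rewrite mulrBr mulr1 s1E; lra.
have a01 : 0 <= a <= 1.
  by rewrite /a ler_pdivrMr // mul1r divr_ge0 ?addr_ge0 //=; lra.
have xE : s1 *: k1 + y1 + (s2 *: k2 + y2) =
    (s1 + s2) *: (a *: k1 + (1 - a) *: k2) + (y1 + y2).
  by rewrite scalerDr !scalerA s1E s2E addrACA.
have := minorant_le (ltW s12_gt0) (K_convex Kk1 Kk2 a01) xE; rewrite f_affine //.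
have -> : (s1 + s2) * (a * f k1 + (1 - a) * f k2 + eps) =
  (s1 + s2) * a * f k1 + (s1 + s2) * (1 - a) * f k2 + (s1 + s2) * eps by ring.
by rewrite s1E s2E; lra.
Qed.

Let minorant_homogeneous (s : R) x : 0 < s -> minorant (s *: x) <= s * minorant x.
Proof.
move=> s_gt0; apply: lb_le_infZ => //.
  by exists (0 * (f 0 + eps) + M * N x), 0, 0, x; rewrite scale0r add0r.
move=> _ [s' [k [y [s'_ge0 Kk -> ->]]]].
have xE : s *: (s' *: k + y) = (s * s') *: k + s *: y by rewrite scalerDr scalerA.
have := minorant_le (mulr_ge0 (ltW s_gt0) s'_ge0) Kk xE.
rewrite (sublinearZ N_sublinear _ (ltW s_gt0)).
suff -> : s * (s' * (f k + eps) + M * N y) = s * s' * (f k + eps) + M * (s * N y) by [].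
by ring.
Qed.

Lemma minorant_sublinear : sublinear minorant.
Proof. by split=> *; [exact: minorant_subadditive|exact: minorant_homogeneous]. Qed.

Let minorant_le_f k : K k -> minorant k <= f k + eps.
Proof.
move=> Kk; have := minorant_le ler01 Kk (_ : k = 1 *: k + 0).
by rewrite scale1r addr0 mul1r sublinear0 // mulr0 addr0; apply.
Qed.

(* [minorant (c e) <= s * eps] for every [s > 0], writing [c e = s ((c / s) e)]. *)
Let minorant_e c : minorant (c *: e) <= 0.
Proof.
have le_eta (eta : R) : 0 < eta -> minorant (c *: e) <= eta.
  move=> eta_gt0; pose s := eta / eps.
  have s_gt0 : 0 < s by rewrite divr_gt0.
  have ceE : c *: e = s *: ((c / s) *: e) + 0 by rewrite addr0 scalerA mulrC divfK ?gt_eqF.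
  have := minorant_le (ltW s_gt0) (Ke (c / s)) ceE.
  by rewrite fe sublinear0 // mulr0 addr0 add0r /s divfK ?gt_eqF.
rewrite leNgt; apply/negP => pos.
by have := le_eta _ (divr_gt0 pos (ltr0Sn _ 1)); lra.
Qed.

Lemma approximation_by_bounded_linear : exists lam : A -> R,
  [/\ forall (s : R) a b, lam (s *: a + b) = s * lam a + lam b,
      lam e = 0,
      exists C, forall a, `|lam a| <= C * N a &
      forall k, K k -> `|f k - lam k| <= eps].
Proof.
have [lam [lamD lamZ lam_le]] := hahn_banach minorant_sublinear.
have lamN x : lam (- x) = - lam x by rewrite -scaleN1r lamZ mulN1r.
exists lam; split.
- by move=> s a b; rewrite lamD lamZ.
- have := le_trans (lam_le _) (minorant_e 1); have := le_trans (lam_le _) (minorant_e (-1)).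
  by rewrite scale1r scaleN1r lamN; lra.
- exists M => a; rewrite ler_norml (le_trans (lam_le _) (minorant_le_N a)) andbT.
  by have := le_trans (lam_le _) (minorant_le_N (- a)); rewrite lamN NN; lra.
move=> k Kk; rewrite ler_norml.
have := le_trans (lam_le _) (minorant_le_f Kk).
by have := le_trans (lam_le _) (minorant_le_f (KN Kk)); rewrite lamN fN //; lra.
Qed.

End Approximation.

Theorem proposition5p3 (R : realType) (A : lmodType R)
    (le : A -> A -> Prop) (e : A) (L : A -> R) :
  is_order_unit_space le e -> is_closed_lip_norm le e L ->
  (forall lam : A -> R, in_dual le e lam -> lam e = 0 -> in_Af0K le e L lam) /\
  (forall f : A -> R, in_Af0K le e L f -> forall eps : R, 0 < eps ->
     exists lam : A -> R, [/\ in_dual le e lam, lam e = 0 &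
        forall a, L a <= 1 -> `|f a - lam a| <= eps]).
Proof.
move=> ou [[L_seminorm L_ker _ _] _].
split=> [lam|f [f_wd f_affine f0 f_cont] eps eps_gt0]; first exact: dual_in_Af0K.
have L_e t : L (t *: e) <= 1 by rewrite (L_ker _).2 //; exists t.
have L0 : L 0 <= 1 by have := L_e 0; rewrite scale0r.
have [del del_gt0 f_cont0] := f_cont 0 L0 eps eps_gt0.
have f_small k : L k <= 1 -> ou_norm le e k < del -> `|f k| < eps.
  move=> Lk /(le_lt_trans (q_norm_le_ou_norm _ _ _)).
  by rewrite -[k]subr0 => /(f_cont0 _ Lk); rewrite subr0 f0 subr0.
have f_e t : f (t *: e) = 0 by have := f_wd 0 t L0; rewrite add0r f0.
have [lam [lam_lin lam_e lam_bounded f_lam]] := approximation_by_bounded_linear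
  (ou_norm_sublinear ou) (ou_norm_ge0 le e) (ou_normN ou) (seminorm_ball_convex L_seminorm)
  (seminorm_ballN L_seminorm) L_e f_affine f_e eps_gt0 del_gt0 f_small.
by exists lam.
Qed.
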